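(* Let $D$ be a squarefree integer, not a perfect square, with $3\mid D$, and let $A,B\in\mathbb{Z}$ be such that $S^{(D;A,B)}$ is smooth, $A\equiv -D\pmod 9$ and $B\equiv 0\pmod 9$. Then $S^{(D;A,B)}(\mathbb{Q}_3)\neq\emptyset$, and $\mathrm{ev}_{\alpha,3}(\mathbf{t})=0$ for every $\mathbf{t}\in S^{(D;A,B)}(\mathbb{Q}_3)$.
   Context: $S^{(D;A,B)}\subset\mathbb{P}^4_{\mathbb{Q}}$ is defined by $t_0t_1=t_2^2-Dt_3^2$ and $(t_0+At_1)(t_0+Bt_1)=t_2^2-Dt_4^2$; smooth iff $AB\neq0$, $A\neq B$, $A^2-2AB+B^2-2A-2B+1\neq0$. For smooth such a surface, a place $v$ and $\mathbf{t}\in S(\mathbb{Q}_v)$, at least one of $t_0/(t_0+At_1)$, $t_1/(t_0+At_1)$, $t_0/(t_0+Bt_1)$, $t_1/(t_0+Bt_1)$ is defined and nonzero at $\mathbf{t}$; for such $q$, $\mathrm{ev}_{\alpha,v}(\mathbf{t})=0$ if the Hilbert symbol $(q,D)_v=1$ and $1/2$ otherwise, independently of the choice of $q$. *)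

From mathcomp Require Import all_boot all_order all_algebra.
From Stdlib Require Import ClassicalEpsilon.
Set Implicit Arguments. Unset Strict Implicit. Unset Printing Implicit Defensive.
Import Order.TTheory GRing.Theory Num.Theory.
Local Open Scope ring_scope.

(* An element of Z_3 is a compatible system of residues x_n mod 3^n,
   represented by integers with x_{n+1} = x_n (mod 3^n). *)
Definition Z3 := { x : nat -> int | forall n : nat,
  (x n.+1 = x n %[mod (3 ^ n)%N%:Z])%Z }.

Definition z3seq (x : Z3) : nat -> int := sval x.
Coercion z3seq : Z3 >-> Funclass.

(* Equality in Z_3 of two componentwise-defined compatible systems
   (ring operations on Z_3 act componentwise on residues). *)
Definition z3eq (f g : nat -> int) : Prop :=
  forall n : nat, (f n = g n %[mod (3 ^ n)%N%:Z])%Z.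

Definition z3nz (f : nat -> int) : Prop := ~ z3eq f (fun _ => 0).

(* A point of P^4(Q_3) is represented (after clearing denominators) by a
   nonzero 5-tuple of 3-adic integers; the equations are homogeneous. *)
Definition on_S (D A B : int) (t0 t1 t2 t3 t4 : Z3) : Prop :=
  [/\ z3nz t0 \/ z3nz t1 \/ z3nz t2 \/ z3nz t3 \/ z3nz t4,
      z3eq (fun n => t0 n * t1 n) (fun n => t2 n ^+ 2 - D * t3 n ^+ 2) &
      z3eq (fun n => (t0 n + A * t1 n) * (t0 n + B * t1 n))
           (fun n => t2 n ^+ 2 - D * t4 n ^+ 2)].

Definition smooth_params (A B : int) : Prop :=
  [/\ A * B != 0, A != B & A ^+ 2 - 2 * A * B + B ^+ 2 - 2 * A - 2 * B + 1 != 0].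

(* For q = a / b in Q_3^* (a, b in Z_3 nonzero), (q, D)_3 = 1 iff
   z^2 = q x^2 + D y^2 has a nonzero solution in Q_3^3; clearing
   denominators, iff b z^2 = a x^2 + b D y^2 has a nonzero solution in Z_3^3. *)
Definition hilbert3_is_one (a b : nat -> int) (D : int) : Prop :=
  exists x y z : Z3, (z3nz x \/ z3nz y \/ z3nz z) /\
    z3eq (fun n => b n * z n ^+ 2)
         (fun n => a n * x n ^+ 2 + b n * D * y n ^+ 2).

Definition pdec (P : Prop) : bool :=
  if excluded_middle_informative P then true else false.

(* ev_{alpha,3}(t): take the first of
     t0/(t0+A t1), t1/(t0+A t1), t0/(t0+B t1), t1/(t0+B t1)
   which is defined (denominator nonzero) and nonzero at t, and return 0 if
   its Hilbert symbol with D is 1, and 1/2 otherwise.  (Default 1/2 if none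
   qualifies; this never happens on S.) *)
Definition ev_alpha3 (D A B : int) (t0 t1 t2 t3 t4 : Z3) : rat :=
  let dA : nat -> int := fun n => t0 n + A * t1 n in
  let dB : nat -> int := fun n => t0 n + B * t1 n in
  let cands : seq ((nat -> int) * (nat -> int)) :=
    [:: (z3seq t0, dA); (z3seq t1, dA); (z3seq t0, dB); (z3seq t1, dB)] in
  let valid (q : (nat -> int) * (nat -> int)) :=
    pdec (z3nz q.1 /\ z3nz q.2) in
  match [seq q <- cands | valid q] with
  | q :: _ => if pdec (hilbert3_is_one q.1 q.2 D) then 0 else 1 / 2
  | [::] => 1 / 2
  end.

Definition int_squarefree (D : int) : Prop :=
  forall m : int, (m * m %| D)%Z -> `|m| = 1.

Definition int_is_square (D : int) : Prop := exists m : int, D = m * m.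

From mathcomp Require Import all_boot all_order all_algebra.
From mathcomp Require Import zify ring.
From Stdlib Require Import Classical ClassicalEpsilon.
Import Order.TTheory GRing.Theory Num.Theory.
Local Open Scope ring_scope.

(* Write D = 3d, A = 3a, B = 9b, so that 3 does not divide d and a = -d
   mod 3.  Everything rests on Hensel's lemma for c r^2 = k, c = k a unit
   mod 3.  It gives the point (1 : 1 : 1 : 0 : r) with -d r^2 = a + 3b + 9ab,
   and it shows that the relevant q is a square up to norms from Q_3(sqrt D):
   for q = t1/(A t1) because -AD/9 = -ad = 1 mod 3; for q = t0/(t0 + B t1)
   with t0 = -A t1 because q = a/(a - 3b) = 1 mod 3; and for
   q = t0/(t0 + A t1) by comparing the valuations of t0 and t1, multiplying
   by the norm (t0 + A t1)(t0 + B t1) when v(t0) = v(t1) + 1, and by the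
   norm t0 t1 together with (-D, D) = 1 when v(t0) >= v(t1) + 2.  Finally
   (t0, t1) != 0 on S because x^2 - 3d y^2 is anisotropic over Q_3. *)

Definition pow3 (n : nat) : int := (3 ^ n)%N%:Z.

Lemma pow30 : pow3 0 = 1. Proof. by []. Qed.
Lemma pow3S n : pow3 n.+1 = 3 * pow3 n. Proof. by rewrite /pow3 expnS PoszM. Qed.
Lemma pow3D m n : pow3 (m + n) = pow3 m * pow3 n.
Proof. by rewrite /pow3 expnD PoszM. Qed.
Lemma pow3_neq0 n : pow3 n != 0. Proof. by rewrite /pow3 eqz_nat expn_eq0. Qed.

Lemma dvdz_pow3 {m n} : (m <= n)%N -> (pow3 m %| pow3 n)%Z.
Proof. by move=> le_mn; rewrite -(subnK le_mn) pow3D dvdz_mull. Qed.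

Lemma dvdz3_pow3 {n} : (0 < n)%N -> (3 %| pow3 n)%Z.
Proof. by move/dvdz_pow3; rewrite pow3S pow30 mulr1. Qed.

Lemma dvdz3_sqrB1 (x : int) : ~~ (3 %| x)%Z -> (3 %| x ^+ 2 - 1)%Z.
Proof. by nia. Qed.

Lemma z3eqP f g : z3eq f g <-> forall n, (pow3 n %| f n - g n)%Z.
Proof.
split=> fg n; first by have /eqP := fg n; rewrite eqz_mod_dvd.
by apply/eqP; rewrite eqz_mod_dvd fg.
Qed.

Lemma z3eq_pointwise f g : (forall n, f n = g n) -> z3eq f g.
Proof. by move=> fg; apply/z3eqP => n; rewrite fg subrr dvdz0. Qed.

Lemma z3eq_lincomb1 l1 {f1 g1 P Q : nat -> int} : z3eq f1 g1 ->
  (forall n, P n - Q n = l1 n * (f1 n - g1 n)) -> z3eq P Q.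
Proof. by move=> /z3eqP e1 PQ; apply/z3eqP => n; rewrite PQ dvdz_mull. Qed.

Lemma z3eq_lincomb2 l1 l2 {f1 g1 f2 g2 P Q : nat -> int} :
  z3eq f1 g1 -> z3eq f2 g2 ->
  (forall n, P n - Q n = l1 n * (f1 n - g1 n) + l2 n * (f2 n - g2 n)) ->
  z3eq P Q.
Proof.
by move=> /z3eqP e1 /z3eqP e2 PQ; apply/z3eqP => n; rewrite PQ rpredD ?dvdz_mull.
Qed.

Lemma z3eq_lincomb3 l1 l2 l3 {f1 g1 f2 g2 f3 g3 P Q : nat -> int} :
  z3eq f1 g1 -> z3eq f2 g2 -> z3eq f3 g3 ->
  (forall n, P n - Q n = l1 n * (f1 n - g1 n) + l2 n * (f2 n - g2 n)
     + l3 n * (f3 n - g3 n)) -> z3eq P Q.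
Proof.
move=> /z3eqP e1 /z3eqP e2 /z3eqP e3 PQ; apply/z3eqP => n.
by rewrite PQ !rpredD ?dvdz_mull.
Qed.

Lemma z3eq_sym {f g} : z3eq f g -> z3eq g f.
Proof. by move=> fg; apply: (z3eq_lincomb1 (fun _ => -1) fg) => n; ring. Qed.

Lemma z3nz_z3eq {f g} : z3eq f g -> z3nz g -> z3nz f.
Proof.
move=> fg nzg f0; apply: nzg.
by apply: (z3eq_lincomb2 (fun _ => -1) (fun _ => 1) fg f0) => n; ring.
Qed.

(* Literally the side condition in [Z3], so that [mkZ3] needs no proof. *)
Definition compatible (f : nat -> int) : Prop := z3eq (fun n => f n.+1) f.

Definition mkZ3 {f : nat -> int} (cf : compatible f) : Z3 := exist _ f cf.

Lemma compatible_Z3 (x : Z3) : compatible x.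
Proof. exact: proj2_sig x. Qed.

Lemma compatible_const c : compatible (fun _ => c).
Proof. exact: z3eq_pointwise. Qed.

Definition Z3const (c : int) : Z3 := mkZ3 (compatible_const c).

Lemma compatibleD {f g} : compatible f -> compatible g ->
  compatible (fun n => f n + g n).
Proof.
by move=> cf cg; apply: (z3eq_lincomb2 (fun _ => 1) (fun _ => 1) cf cg) => n; ring.
Qed.

Lemma compatibleM {f g} : compatible f -> compatible g ->
  compatible (fun n => f n * g n).
Proof.
move=> cf cg.
by apply: (z3eq_lincomb2 (fun n => g n.+1) (fun n => f n) cf cg) => n; ring.
Qed.

Lemma dvdz3_compatible {f} n : compatible f -> (0 < n)%N ->
  (3 %| f n)%Z = (3 %| f 1%N)%Z.
Proof.
move=> /z3eqP cf; elim: n => // -[_ // | n] IH _.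
have step : (3 %| f n.+2 - f n.+1)%Z := dvdz_trans (dvdz3_pow3 (ltn0Sn n)) (cf n.+1).
by rewrite -IH // -[f n.+2](subrK (f n.+1)) rpredDl.
Qed.

(* [f 1] is the residue of [f] modulo 3. *)
Definition unit3 (f : nat -> int) : bool := ~~ (3 %| f 1%N)%Z.

Lemma unit3M {u v} : unit3 u -> unit3 v -> unit3 (fun n => u n * v n).
Proof. by rewrite /unit3 => u3 v3; nia. Qed.

Lemma unit3_dvdzB {f g} : (3 %| f 1%N - g 1%N)%Z -> unit3 f = unit3 g.
Proof. by rewrite /unit3 => fg; rewrite -[f 1%N](subrK (g 1%N)) rpredDl. Qed.

Lemma z3eq_pow3_unit_lt {k m u} v : compatible u -> unit3 u -> (k < m)%N ->
  ~ z3eq (fun n => pow3 k * u n) (fun n => pow3 m * v n).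
Proof.
move=> cu uu lt_km /z3eqP /(_ k.+1) e.
have : (pow3 k.+1 %| pow3 k * u k.+1)%Z.
  by rewrite -(rpredBr _ (dvdz_mulr (v k.+1) (dvdz_pow3 lt_km))).
rewrite pow3S [3 * _]mulrC dvdz_mul2l ?pow3_neq0 // dvdz3_compatible //.
exact/negP.
Qed.

Lemma z3nz_pow3_unit k {u} : compatible u -> unit3 u ->
  z3nz (fun n => pow3 k * u n).
Proof.
move=> cu uu u0; apply: (z3eq_pow3_unit_lt (fun=> 0) cu uu (ltnSn k)).
by apply: (z3eq_lincomb1 (fun _ => 1) u0) => n; ring.
Qed.

Lemma z3nz_const {c} : c != 0 -> z3nz (fun _ => c).
Proof.
move=> c0 /z3eqP /(_ `|c|%N); rewrite subr0 dvdzE /= => /dvdn_leq.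
by rewrite absz_gt0 c0 leqNgt ltn_expl // => /(_ isT).
Qed.

Lemma z3_valuation {x} : compatible x -> z3eq x (fun _ => 0) \/
  exists k u, [/\ compatible u, unit3 u & z3eq x (fun n => pow3 k * u n)].
Proof.
move=> cx; case: (classic (z3eq x (fun _ => 0))) => [|nzx]; [by left | right].
have [n] : exists n, ~~ (pow3 n %| x n)%Z.
  apply: NNPP => /not_ex_all_not xn; apply: nzx; apply/z3eqP => n.
  by rewrite subr0; apply/negPn/negP/xn.
elim: n x cx {nzx} => [|n IH] x cx; first by rewrite pow30 dvd1z.
case x3: (unit3 x) => xn.
  by exists 0%N, x; split=> //; apply: z3eq_pointwise => m; rewrite mul1r.
pose y m := (x m.+1 %/ 3)%Z.
have x3m m : x m.+1 = 3 * y m.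
  by rewrite mulrC divzK // dvdz3_compatible //; apply/negbFE.
have cy : compatible y.
  apply/z3eqP => m; rewrite -(@dvdz_mul2l 3) // -pow3S mulrBr -!x3m.
  exact: (proj1 (z3eqP _ _) cx m.+1).
have [|k [u [cu uu yu]]] := IH y cy.
  by apply: contraNN xn; rewrite x3m pow3S dvdz_mul2l.
exists k.+1, u; split=> //.
apply: (z3eq_lincomb2 (fun _ => -1) (fun _ => 3) cx yu) => m.
by rewrite x3m pow3S; ring.
Qed.

Lemma z3nz_mul {f g} : compatible f -> compatible g -> z3nz f -> z3nz g ->
  z3nz (fun n => f n * g n).
Proof.
move=> cf cg nzf nzg.
have [//|[k [u [cu uu fu]]]] := z3_valuation cf.
have [//|[m [v [cv uv gv]]]] := z3_valuation cg.
apply: z3nz_z3eq (z3nz_pow3_unit (k + m) (compatibleM cu cv) (unit3M uu uv)).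
apply: (z3eq_lincomb2 f (fun n => pow3 m * v n) gv fu) => n.
by rewrite pow3D; ring.
Qed.

Lemma norm3_anisotropic d x y : ~~ (3 %| d)%Z -> compatible x -> compatible y ->
  z3eq (fun n => x n ^+ 2 - 3 * d * y n ^+ 2) (fun _ => 0) ->
  z3eq x (fun _ => 0) /\ z3eq y (fun _ => 0).
Proof.
move=> d3 cx cy N0.
have nz3d : z3nz (fun _ => 3 * d) by apply: z3nz_const; lia.
have [y0|[m [v [cv uv yv]]]] := z3_valuation cy.
  split=> //; apply: NNPP => nzx; apply: (z3nz_mul cx cx nzx nzx).
  apply: (z3eq_lincomb2 (fun _ => 1) (fun n => 3 * d * y n) N0 y0) => n; ring.
have nzy : z3nz y by apply: z3nz_z3eq yv (z3nz_pow3_unit m cv uv).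
have [x0|[k [u [cu uu xu]]]] := z3_valuation cx.
  exfalso; apply: (z3nz_mul (compatible_const _) (compatibleM cy cy) nz3d).
    exact: z3nz_mul.
  apply: (z3eq_lincomb2 (fun _ => -1) x N0 x0) => n; ring.
exfalso.
(* x^2 and 3d y^2 have 3-adic valuations of different parity *)
have e : z3eq (fun n => pow3 (k + k) * (u n * u n))
              (fun n => pow3 (m + m).+1 * (d * (v n * v n))).
  apply: (z3eq_lincomb3 (fun n => - (x n + pow3 k * u n)) (fun _ => 1)
    (fun n => 3 * d * (y n + pow3 m * v n)) xu N0 yv) => n.
  by rewrite pow3S !pow3D; ring.
have [lt|gt] : (k + k < (m + m).+1)%N \/ ((m + m).+1 < k + k)%N by lia.
  exact: (z3eq_pow3_unit_lt _ (compatibleM cu cu) (unit3M uu uu) lt e).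
apply: (z3eq_pow3_unit_lt _ _ _ gt (z3eq_sym e)).
  by apply: compatibleM (compatible_const _) (compatibleM cv cv).
by apply: unit3M d3 (unit3M uv uv).
Qed.

(* Newton's iteration for c r^2 = k: since (c r)^2 = 1 mod 3, the defect
   E = c r^2 - k is multiplied by 1 + 2 (c r)^2 + E c^3 r^2 = 0 mod 3. *)
Lemma hensel_step {P c k r : int} : ~~ (3 %| c)%Z -> ~~ (3 %| r)%Z ->
  (P %| c * r ^+ 2 - k)%Z -> (3 %| c * r ^+ 2 - k)%Z ->
  (P * 3 %| c * (r + (c * r ^+ 2 - k) * c * r) ^+ 2 - k)%Z /\
  ~~ (3 %| r + (c * r ^+ 2 - k) * c * r)%Z.
Proof.
move=> c3 r3 PE E3; set E := c * r ^+ 2 - k in PE E3 *.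
split; last by rewrite rpredDr // !dvdz_mulr.
have -> : c * (r + E * c * r) ^+ 2 - k
    = E * (2 * ((c * r) ^+ 2 - 1) + 3 + E * c ^+ 3 * r ^+ 2) by rewrite /E; ring.
have cr3 : (3 %| (c * r) ^+ 2 - 1)%Z by apply: dvdz3_sqrB1; nia.
by apply: dvdz_mul => //; clearbody E; clear PE; nia.
Qed.

Fixpoint hensel_seq (c k : nat -> int) (n : nat) : int :=
  if n is m.+1 then
    let r := hensel_seq c k m in r + (c m.+1 * r ^+ 2 - k m.+1) * c m.+1 * r
  else 1.

Section Hensel.

Variables c k : nat -> int.
Hypotheses (cc : compatible c) (ck : compatible k) (uc : unit3 c).
Hypothesis ck1 : (3 %| c 1%N - k 1%N)%Z.

Lemma hensel_defectS {n r} : (pow3 n %| c n * r ^+ 2 - k n)%Z ->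
  (pow3 n %| c n.+1 * r ^+ 2 - k n.+1)%Z.
Proof.
move/z3eqP: cc => /(_ n) dc; move/z3eqP: ck => /(_ n) dk E.
have -> : c n.+1 * r ^+ 2 - k n.+1
    = (c n * r ^+ 2 - k n) + (c n.+1 - c n) * r ^+ 2 - (k n.+1 - k n) by ring.
exact: rpredB (rpredD E (dvdz_mulr _ dc)) dk.
Qed.

Lemma hensel_seq_spec n : ~~ (3 %| hensel_seq c k n)%Z /\
  (pow3 n %| c n * hensel_seq c k n ^+ 2 - k n)%Z.
Proof.
elim: n => [|n [r3 E]]; first by rewrite pow30 dvd1z.
have E3 : (3 %| c n.+1 * hensel_seq c k n ^+ 2 - k n.+1)%Z.
  case: n {r3} E => [_ | n /hensel_defectS E]; first by rewrite expr1n mulr1.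
  exact: dvdz_trans (dvdz3_pow3 (ltn0Sn n)) E.
have c3 : ~~ (3 %| c n.+1)%Z by rewrite dvdz3_compatible.
have [E' r3'] := hensel_step c3 r3 (hensel_defectS E) E3.
by split=> //=; rewrite pow3S [3 * _]mulrC.
Qed.

Lemma hensel_sqrt : exists2 r, compatible r & z3eq (fun n => c n * r n ^+ 2) k.
Proof.
exists (hensel_seq c k); last by apply/z3eqP => n; case: (hensel_seq_spec n).
apply/z3eqP => n /=; rewrite addrAC subrr add0r.
have [_ E] := hensel_seq_spec n.
by rewrite !dvdz_mulr // hensel_defectS.
Qed.

End Hensel.

Arguments hensel_sqrt {c k}.

Lemma pdecT {P : Prop} : P -> pdec P = true.
Proof. by rewrite /pdec; case: excluded_middle_informative. Qed.

Lemma pdecF {P : Prop} : ~ P -> pdec P = false.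
Proof. by rewrite /pdec; case: excluded_middle_informative. Qed.

Lemma on_S_t0_t1_nz {d A B t0 t1 t2 t3 t4} : ~~ (3 %| d)%Z ->
  on_S (3 * d) A B t0 t1 t2 t3 t4 ->
  ~ (z3eq t0 (fun _ => 0) /\ z3eq t1 (fun _ => 0)).
Proof.
move=> d3 [nz E1 E2] [t0_0 t1_0].
have [c2 c3 c4] := And3 (compatible_Z3 t2) (compatible_Z3 t3) (compatible_Z3 t4).
have [t2_0 t3_0] : z3eq t2 (fun _ => 0) /\ z3eq t3 (fun _ => 0).
  apply: norm3_anisotropic d3 c2 c3 _.
  by apply: (z3eq_lincomb2 (fun _ => -1) t1 E1 t0_0) => n; ring.
have [_ t4_0] : z3eq t2 (fun _ => 0) /\ z3eq t4 (fun _ => 0).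
  apply: norm3_anisotropic d3 c2 c4 _.
  by apply: (z3eq_lincomb3 (fun _ => -1) (fun n => t0 n + B * t1 n)
    (fun n => A * (t0 n + B * t1 n)) E2 t0_0 t1_0) => n; ring.
by case: nz => [|[|[|[]]]]; apply.
Qed.

Lemma hilbert3_of_sqr_ratio {a b D} (r : Z3) :
  z3eq (fun n => b n * r n ^+ 2) a -> hilbert3_is_one a b D.
Proof.
move=> bra; exists (Z3const 1), (Z3const 0), r; split.
  by left; apply: z3nz_const.
by apply: (z3eq_lincomb1 (fun _ => 1) bra) => n /=; ring.
Qed.

Lemma hilbert3_of_norm_ratio {a b b' D} (y w r : Z3) : compatible b -> z3nz b ->
  z3eq (fun n => b' n * r n ^+ 2) a ->
  z3eq (fun n => b n * b' n) (fun n => y n ^+ 2 - D * w n ^+ 2) ->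
  hilbert3_is_one a b D.
Proof.
move=> cb nzb ra bN.
have [cy cw cr] := And3 (compatible_Z3 y) (compatible_Z3 w) (compatible_Z3 r).
exists (mkZ3 cb), (mkZ3 (compatibleM cw cr)), (mkZ3 (compatibleM cy cr)).
split; first by left.
apply: (z3eq_lincomb2 (fun n => - b n * r n ^+ 2) (fun n => b n ^+ 2) bN ra).
by move=> n /=; ring.
Qed.

Lemma hilbert3_of_norm_twist {a b t D} (x y w r : Z3) : z3nz x ->
  z3eq (fun n => a n * t n) (fun n => y n ^+ 2 - D * w n ^+ 2) ->
  z3eq (fun n => x n ^+ 2) (fun n => - D * b n * t n * r n ^+ 2) ->
  hilbert3_is_one a b D.
Proof.
move=> nzx aN xb.
have [cy cw cr] := And3 (compatible_Z3 y) (compatible_Z3 w) (compatible_Z3 r).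
exists x, (mkZ3 (compatibleM cy cr)).
exists (mkZ3 (compatibleM (compatibleM (compatible_const D) cw) cr)).
split; first by left.
apply: (z3eq_lincomb2 (fun n => b n * D * r n ^+ 2) (fun n => - a n) aN xb).
by move=> n /=; ring.
Qed.

Lemma ev_alpha3_t0_dA {D A B} {t0 t1 t2 t3 t4 : Z3} :
  z3nz t0 -> z3nz (fun n => t0 n + A * t1 n) ->
  hilbert3_is_one t0 (fun n => t0 n + A * t1 n) D ->
  ev_alpha3 D A B t0 t1 t2 t3 t4 = 0.
Proof.
by move=> nz0 nzA h; rewrite /ev_alpha3 /= (pdecT (conj nz0 nzA)) /= pdecT.
Qed.

Lemma ev_alpha3_t1_dA {D A B} {t0 t1 t2 t3 t4 : Z3} :
  z3eq t0 (fun _ => 0) -> z3nz t1 -> z3nz (fun n => t0 n + A * t1 n) ->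
  hilbert3_is_one t1 (fun n => t0 n + A * t1 n) D ->
  ev_alpha3 D A B t0 t1 t2 t3 t4 = 0.
Proof.
move=> t0_0 nz1 nzA h; have not_t0 : ~ (z3nz t0 /\ z3nz (fun n => t0 n + A * t1 n)).
  by case=> /(_ t0_0).
by rewrite /ev_alpha3 /= (pdecF not_t0) (pdecT (conj nz1 nzA)) /= pdecT.
Qed.

Lemma ev_alpha3_t0_dB {D A B} {t0 t1 t2 t3 t4 : Z3} :
  z3nz t0 -> z3eq (fun n => t0 n + A * t1 n) (fun _ => 0) ->
  z3nz (fun n => t0 n + B * t1 n) ->
  hilbert3_is_one t0 (fun n => t0 n + B * t1 n) D ->
  ev_alpha3 D A B t0 t1 t2 t3 t4 = 0.
Proof.
move=> nz0 dA_0 nzB h.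
have not_dA t : ~ (z3nz t /\ z3nz (fun n => t0 n + A * t1 n)) by case=> _ /(_ dA_0).
rewrite /ev_alpha3 /= (pdecF (not_dA t0)) (pdecF (not_dA t1)).
by rewrite (pdecT (conj nz0 nzB)) /= pdecT.
Qed.

Section SurfaceAt3.

Variables d a b : int.
Hypotheses (d3 : ~~ (3 %| d)%Z) (ad3 : (3 %| a + d)%Z).

Local Notation S := (on_S (3 * d) (3 * a) (9 * b)).
Local Notation dA t0 t1 := (fun n : nat => z3seq t0 n + 3 * a * z3seq t1 n).
Local Notation dB t0 t1 := (fun n : nat => z3seq t0 n + 9 * b * z3seq t1 n).

Lemma S_has_point : exists t0 t1 t2 t3 t4 : Z3, S t0 t1 t2 t3 t4.
Proof.
have [r cr dr] : exists2 r, compatible r &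
    z3eq (fun n => - d * r n ^+ 2) (fun _ => a + 3 * b + 9 * a * b).
  by apply: hensel_sqrt; rewrite ?/unit3; [exact: compatible_const.. | lia | nia].
exists (Z3const 1), (Z3const 1), (Z3const 1), (Z3const 0), (mkZ3 cr); split.
- by left; apply: z3nz_const.
- by apply: z3eq_pointwise => n /=; ring.
- by apply: (z3eq_lincomb1 (fun _ => -3) dr) => n /=; ring.
Qed.

Lemma hilbert3_t1_dA {t0 t1 : Z3} : z3eq t0 (fun _ => 0) ->
  hilbert3_is_one t1 (dA t0 t1) (3 * d).
Proof.
move=> t0_0.
have [s cs ds] : exists2 s, compatible s &
    z3eq (fun n => 1 * s n ^+ 2) (fun _ => - (a * d)).
  by apply: hensel_sqrt; [exact: compatible_const.. | by [] | nia].
exists (mkZ3 (compatibleM (compatible_const 3) cs)), (Z3const 1), (Z3const 0).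
split; first by right; left; apply: z3nz_const.
apply: (z3eq_lincomb2 (fun n => -9 * t1 n) (fun _ => -3 * d) ds t0_0).
by move=> n /=; ring.
Qed.

Lemma hilbert3_t0_dB {t0 t1 : Z3} : z3eq (dA t0 t1) (fun _ => 0) ->
  hilbert3_is_one t0 (dB t0 t1) (3 * d).
Proof.
move=> dA_0.
have [z cz dz] : exists2 z, compatible z &
    z3eq (fun n => (a - 3 * b) * z n ^+ 2) (fun _ => a).
  by apply: hensel_sqrt; rewrite ?/unit3; [exact: compatible_const.. | lia | lia].
apply: (hilbert3_of_sqr_ratio (mkZ3 cz)).
apply: (z3eq_lincomb2 (fun n => z n ^+ 2 - 1) (fun n => -3 * t1 n) dA_0 dz).
by move=> n /=; ring.
Qed.

Section Valuations.

Context {t0 t1 t2 t3 t4 : Z3} {al be : nat} {u0 u1 : nat -> int}.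
Hypotheses (cu0 : compatible u0) (cu1 : compatible u1).
Hypotheses (e0 : z3eq t0 (fun n => pow3 al * u0 n))
           (e1 : z3eq t1 (fun n => pow3 be * u1 n)).

Lemma hilbert3_t0_dA_le : unit3 u0 -> (al <= be)%N ->
  hilbert3_is_one t0 (dA t0 t1) (3 * d).
Proof.
move=> uu0 le_ab.
pose c n := u0 n + 3 * pow3 (be - al) * a * u1 n.
have cc : compatible c by apply: compatibleD cu0 (compatibleM (compatible_const _) cu1).
have c_u0 : (3 %| c 1%N - u0 1%N)%Z by rewrite /c addrAC subrr add0r -!mulrA dvdz_mulr.
have uc : unit3 c by rewrite (unit3_dvdzB c_u0).
have [r cr dr] := hensel_sqrt cc cu0 uc c_u0.
apply: (hilbert3_of_sqr_ratio (mkZ3 cr)).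
have pbe : pow3 be = pow3 al * pow3 (be - al) by rewrite -pow3D subnKC.
apply: (z3eq_lincomb3 (fun n => r n ^+ 2 - 1) (fun n => 3 * a * r n ^+ 2)
  (fun _ => pow3 al) e0 e1 dr) => n /=.
by rewrite /c pbe; ring.
Qed.

Lemma hilbert3_t0_dA_succ : S t0 t1 t2 t3 t4 -> z3nz (dA t0 t1) -> unit3 u0 ->
  al = be.+1 -> hilbert3_is_one t0 (dA t0 t1) (3 * d).
Proof.
move=> [_ _ E2] nzA uu0 al_eq.
pose c n := u0 n + 3 * b * u1 n.
have cc : compatible c by apply: compatibleD cu0 (compatibleM (compatible_const _) cu1).
have c_u0 : (3 %| c 1%N - u0 1%N)%Z by rewrite /c addrAC subrr add0r -mulrA dvdz_mulr.
have uc : unit3 c by rewrite (unit3_dvdzB c_u0).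
have [s cs ds] := hensel_sqrt cc cu0 uc c_u0.
have cA : compatible (dA t0 t1).
  apply: compatibleD (compatible_Z3 t0) _.
  exact: compatibleM (compatible_const _) (compatible_Z3 t1).
apply: (hilbert3_of_norm_ratio t2 t4 (mkZ3 cs) cA nzA _ E2).
apply: (z3eq_lincomb3 (fun n => s n ^+ 2 - 1) (fun n => 9 * b * s n ^+ 2)
  (fun _ => pow3 al) e0 e1 ds) => n /=.
by rewrite /c al_eq pow3S; ring.
Qed.

Lemma hilbert3_t0_dA_gt : S t0 t1 t2 t3 t4 -> unit3 u1 -> (be.+2 <= al)%N ->
  hilbert3_is_one t0 (dA t0 t1) (3 * d).
Proof.
move=> [_ E1 _] uu1 lt_ba.
pose c n := - d * (3 * pow3 (al - be.+2) * u0 n + a * u1 n) * u1 n.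
have cc : compatible c.
  apply: compatibleM (compatibleM (compatible_const _) _) cu1.
  exact: compatibleD (compatibleM (compatible_const _) cu0)
                     (compatibleM (compatible_const _) cu1).
(* c = -a d u1^2 = (d u1)^2 = 1 mod 3 *)
have c_1 : (3 %| c 1%N - 1)%Z.
  have du1 : (3 %| (d * u1 1%N) ^+ 2 - 1)%Z.
    by apply: dvdz3_sqrB1; move: uu1; rewrite /unit3; nia.
  have -> : c 1%N - 1 = ((d * u1 1%N) ^+ 2 - 1) - (a + d) * (d * u1 1%N ^+ 2)
      - 3 * (d * pow3 (al - be.+2) * u0 1%N * u1 1%N) by rewrite /c; ring.
  apply: rpredB; last exact: dvdz_mulr (dvdzz 3).
  by apply: rpredB; last exact: dvdz_mulr.
have uc : unit3 c by rewrite (unit3_dvdzB c_1).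
have [r cr dr] := hensel_sqrt cc (compatible_const 1) uc c_1.
apply: (hilbert3_of_norm_twist (Z3const (3 * pow3 be)) t2 t3 (mkZ3 cr) _ E1).
  by apply: z3nz_const; rewrite mulf_neq0 ?pow3_neq0.
have pal : pow3 al = pow3 be.+2 * pow3 (al - be.+2) by rewrite -pow3D subnKC.
apply: (z3eq_lincomb3 (fun n => 3 * d * r n ^+ 2 * t1 n)
  (fun n => 3 * d * r n ^+ 2 * (pow3 al * u0 n + 3 * a * (t1 n + pow3 be * u1 n)))
  (fun _ => - (3 * pow3 be) ^+ 2) e0 e1 dr) => n /=.
by rewrite /c pal !pow3S; ring.
Qed.

End Valuations.

Lemma hilbert3_t0_dA {t0 t1 t2 t3 t4 : Z3} : S t0 t1 t2 t3 t4 ->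
  z3nz t0 -> z3nz (dA t0 t1) -> hilbert3_is_one t0 (dA t0 t1) (3 * d).
Proof.
move=> St nz0 nzA.
have [t1_0|[be [u1 [cu1 uu1 e1]]]] := z3_valuation (compatible_Z3 t1).
  apply: (hilbert3_of_sqr_ratio (Z3const 1)).
  by apply: (z3eq_lincomb1 (fun _ => 3 * a) t1_0) => n /=; ring.
have [//|[al [u0 [cu0 uu0 e0]]]] := z3_valuation (compatible_Z3 t0).
case: (leqP al be) => [le_ab|lt_ba].
  exact: (hilbert3_t0_dA_le cu0 cu1 e0 e1 uu0 le_ab).
have [al_eq|lt2] : al = be.+1 \/ (be.+2 <= al)%N by lia.
  exact: (hilbert3_t0_dA_succ cu0 cu1 e0 e1 St).
exact: (hilbert3_t0_dA_gt cu0 cu1 e0 e1 St).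
Qed.

Lemma ev_alpha3_S (t0 t1 t2 t3 t4 : Z3) : S t0 t1 t2 t3 t4 ->
  ev_alpha3 (3 * d) (3 * a) (9 * b) t0 t1 t2 t3 t4 = 0.
Proof.
move=> St; have a3 : ~~ (3 %| a)%Z by lia.
have nz_t1M c : c != 0 -> z3nz t1 -> z3nz (fun n => c * t1 n).
  by move=> c0; apply: z3nz_mul (compatible_const c) (compatible_Z3 t1) (z3nz_const c0).
case: (classic (z3eq t0 (fun _ => 0))) => [t0_0|nz0].
  have nz1 : z3nz t1 by move=> t1_0; exact: on_S_t0_t1_nz d3 St (conj t0_0 t1_0).
  have nzA : z3nz (dA t0 t1).
    apply: z3nz_z3eq (nz_t1M (3 * a) _ nz1); last by lia.
    by apply: (z3eq_lincomb1 (fun _ => 1) t0_0) => n; ring.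
  exact: ev_alpha3_t1_dA t0_0 nz1 nzA (hilbert3_t1_dA t0_0).
case: (classic (z3eq (dA t0 t1) (fun _ => 0))) => [dA_0|nzA]; last first.
  exact: ev_alpha3_t0_dA nz0 nzA (hilbert3_t0_dA St nz0 nzA).
have nz1 : z3nz t1.
  move=> t1_0; apply: nz0.
  by apply: (z3eq_lincomb2 (fun _ => 1) (fun _ => - (3 * a)) dA_0 t1_0) => n; ring.
have nzB : z3nz (dB t0 t1).
  apply: z3nz_z3eq (nz_t1M (9 * b - 3 * a) _ nz1); last by lia.
  by apply: (z3eq_lincomb1 (fun _ => 1) dA_0) => n; ring.
exact: ev_alpha3_t0_dB nz0 dA_0 nzB (hilbert3_t0_dB dA_0).
Qed.

End SurfaceAt3.

Theorem lemma5p2 (D A B : int) :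
  int_squarefree D -> ~ int_is_square D -> (3 %| D)%Z ->
  smooth_params A B ->
  (A = - D %[mod 9])%Z -> (B = 0 %[mod 9])%Z ->
  (exists t0 t1 t2 t3 t4 : Z3, on_S D A B t0 t1 t2 t3 t4) /\
  (forall t0 t1 t2 t3 t4 : Z3, on_S D A B t0 t1 t2 t3 t4 ->
     ev_alpha3 D A B t0 t1 t2 t3 t4 = 0).
Proof.
move=> sqD _ D3 _ /eqP A_mod /eqP B_mod.
have [d eD] : exists d, D = 3 * d by case/dvdzP: D3 => d ->; exists d; rewrite mulrC.
subst D; have d3 : ~~ (3 %| d)%Z by apply/negP => /(dvdz_mul (dvdzz 3)) /sqD.
have [a -> ad3] : exists2 a, A = 3 * a & (3 %| a + d)%Z.
  move: A_mod; rewrite eqz_mod_dvd => /dvdzP [j Aj].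
  exists (3 * j - d); last by apply/dvdzP; exists j; ring.
  by rewrite -[A](subrK (- (3 * d))) Aj; ring.
have [b ->] : exists b, B = 9 * b.
  by move: B_mod; rewrite eqz_mod_dvd subr0 => /dvdzP [b ->]; exists b; rewrite mulrC.
split; [exact: S_has_point | exact: ev_alpha3_S].
Qed.
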